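(* Let $N\ge 1$, let $f:Z[1,N]\times\mathbb{R}\to\mathbb{R}$ be continuous in its second variable for every $k\in Z[1,N]$, and let $p:Z[1,N+2]\to\mathbb{R}$, $q:Z[1,N+1]\to\mathbb{R}$. Assume that (1) there exists $m>0$ such that $s f(k,s)\ge 0$ for all $|s|\ge m$ and $k\in Z[1,N]$; (2) $\eta'(p)\,p_{\min}-\eta(q)\,q_{\max}>0$. Then the functional $J$ is coercive on $E$ and the boundary value problem $$\Delta^2\big(p(k)\Delta^2 y(k-2)\big)+\Delta\big(q(k)\Delta y(k-1)\big)+f(k,y(k))=0\ \ (k\in Z[1,N]),\qquad y(-1)=y(0)=y(N+1)=y(N+2)=0$$ has at least one solution. Moreover, if there exists $k_0\in Z[1,N]$ with $f(k_0,0)\ne 0$, this solution is non-zero.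
   Context: $Z[a,b]=[a,b]\cap\mathbb{Z}$; $\Delta x(k)=x(k+1)-x(k)$, $\Delta^2=\Delta\circ\Delta$; $\Delta^2(p(k)\Delta^2y(k-2))$ means $\Delta^2$ applied to $k\mapsto p(k)\Delta^2 y(k-2)$, similarly for $\Delta(q(k)\Delta y(k-1))$. A solution is a function $y:Z[-1,N+2]\to\mathbb{R}$ satisfying the equation and boundary conditions. $E=\{y:Z[-1,N+2]\to\mathbb{R}\mid y(-1)=y(0)=y(N+1)=y(N+2)=0\}$ with norm $\|y\|=(\sum_{k=1}^N y(k)^2)^{1/2}$; $F(k,s)=\int_0^s f(k,t)dt$; $J(y)=\sum_{k=1}^{N+2}\frac{p(k)}{2}(\Delta^2 y(k-2))^2-\sum_{k=1}^{N+1}\frac{q(k)}{2}(\Delta y(k-1))^2+\sum_{k=1}^N F(k,y(k))$. $J$ is coercive if $J(y)\to+\infty$ as $\|y\|\to\infty$. $p_{\min}=\min_{Z[1,N+2]}p$, $p_{\max}=\max_{Z[1,N+2]}p$, $q_{\min}=\min_{Z[1,N+1]}q$, $q_{\max}=\max_{Z[1,N+1]}q$. With $\tilde y=(y(1),\dots,y(N))^T$, let $V$ be the $(N+1)\times N$ matrix with $V\tilde y=(\Delta y(0),\dots,\Delta y(N))^T$ and $W$ the $(N+2)\times N$ matrix with $W\tilde y=(\Delta^2y(-1),\dots,\Delta^2y(N))^T$ for $y\in E$; $\lambda_1$, $\lambda_2$ are the smallest eigenvalues of $V^TV$ and $W^TW$ respectively. Define $\eta'(p)=\lambda_2$ if $p_{\min}\ge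 0$ and $\eta'(p)=16$ if $p_{\min}<0$; $\eta(q)=\lambda_1$ if $q_{\max}<0$ and $\eta(q)=4$ if $q_{\max}\ge 0$. *)

From HB Require Import structures.
From mathcomp Require Import all_boot all_order all_algebra.
From mathcomp Require Import all_classical all_reals all_analysis.
Set Implicit Arguments. Unset Strict Implicit. Unset Printing Implicit Defensive.
Import Order.TTheory GRing.Theory Num.Theory.
Import numFieldNormedType.Exports.
Local Open Scope classical_set_scope.
Local Open Scope ring_scope.

Section Defs.
Variable R : realType.

Definition fdiff (x : int -> R) : int -> R := fun k => x (k + 1) - x k.

Definition bvp_lhs (p q : int -> R) (f : int -> R -> R) (y : int -> R) (k : int) : R :=
  fdiff (fdiff (fun j => p j * fdiff (fdiff y) (j - 2))) k
  + fdiff (fun j => q j * fdiff y (j - 1)) k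
  + f k (y k).

Definition is_solution (N : nat) (p q : int -> R) (f : int -> R -> R) (y : int -> R) : Prop :=
  (forall k : int, 1 <= k <= N%:Z -> bvp_lhs p q f y k = 0)
  /\ y (-1) = 0 /\ y 0 = 0 /\ y (N%:Z + 1) = 0 /\ y (N%:Z + 2) = 0.

(* membership in E (only the values on Z[-1,N+2] matter) *)
Definition inE (N : nat) (y : int -> R) : Prop :=
  y (-1) = 0 /\ y 0 = 0 /\ y (N%:Z + 1) = 0 /\ y (N%:Z + 2) = 0.

Definition normE (N : nat) (y : int -> R) : R :=
  Num.sqrt (\sum_(1 <= k < N.+1) (y k%:Z) ^+ 2).

Definition Fprim (f : int -> R -> R) (k : int) (s : R) : R :=
  if 0 <= s then (\int[@lebesgue_measure R]_(t in `[0, s]) f k t)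
  else - (\int[@lebesgue_measure R]_(t in `[s, 0]) f k t).

Definition Jfun (N : nat) (p q : int -> R) (f : int -> R -> R) (y : int -> R) : R :=
  \sum_(1 <= k < N.+3) (p k%:Z / 2 * (fdiff (fdiff y) (k%:Z - 2)) ^+ 2)
  - \sum_(1 <= k < N.+2) (q k%:Z / 2 * (fdiff y (k%:Z - 1)) ^+ 2)
  + \sum_(1 <= k < N.+1) Fprim f k%:Z (y k%:Z).

Definition coercive_on_E (N : nat) (J : (int -> R) -> R) : Prop :=
  forall M : R, exists r : R, forall y : int -> R,
    inE N y -> r < normE N y -> M < J y.

(* the element y of E with y~ = v : y(k) = v_(k-1) for k in Z[1,N], 0 otherwise *)
Definition ext_of (N : nat) (v : 'cV[R]_N) : int -> R :=
  fun k => match k with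
           | Posz n => if (1 <= n)%N then
                        (if @insub _ (fun i => i < N)%N 'I_N n.-1 is Some i then v i 0 else 0)
                      else 0
           | Negz _ => 0
           end.

(* V y~ = (Delta y(0), ..., Delta y(N))^T *)
Definition Vmx (N : nat) : 'M[R]_(N.+1, N) :=
  \matrix_(i < N.+1, j < N) fdiff (ext_of (delta_mx j 0)) (i%:Z).

(* W y~ = (Delta^2 y(-1), ..., Delta^2 y(N))^T *)
Definition Wmx (N : nat) : 'M[R]_(N.+2, N) :=
  \matrix_(i < N.+2, j < N) fdiff (fdiff (ext_of (delta_mx j 0))) (i%:Z - 1).

Definition min_eig (n : nat) (A : 'M[R]_n) : R := inf [set a | eigenvalue A a].

Definition lambda1 (N : nat) : R := min_eig ((Vmx N)^T *m Vmx N).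
Definition lambda2 (N : nat) : R := min_eig ((Wmx N)^T *m Wmx N).

Definition pmin (N : nat) (p : int -> R) : R :=
  \big[Num.min/p 1]_(1 <= k < N.+3) p k%:Z.
Definition qmax (N : nat) (q : int -> R) : R :=
  \big[Num.max/q 1]_(1 <= k < N.+2) q k%:Z.

Definition eta_p (N : nat) (p : int -> R) : R :=
  if 0 <= pmin N p then lambda2 N else 16.
Definition eta_q (N : nat) (q : int -> R) : R :=
  if qmax N q < 0 then lambda1 N else 4.

End Defs.

(* On E, J is a continuous function of x = (y(1), ..., y(N)).  The sign
   condition on f makes every F(k, .) bounded below, and the quadratic part is
   controlled by
     lambda2 |x|^2 <= sum (Delta^2 y)^2 <= 16 |x|^2,
     lambda1 |x|^2 <= sum (Delta y)^2 <= 4 |x|^2,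
   the lower bounds because the least eigenvalue of a Gram matrix B B^T bounds
   |u B|^2 / |u|^2 from below, the upper ones from
   (a - 2b + c)^2 <= 4a^2 + 8b^2 + 4c^2 and (a - b)^2 <= 2a^2 + 2b^2.  With the
   case split defining eta'(p) and eta(q) this gives J(y) >= c/2 |x|^2 - C for
   c = eta'(p) p_min - eta(q) q_max > 0, so J is coercive and has a global
   minimiser.  The derivative of J in the direction of the k-th unit vector is
   the left-hand side of the equation at k, so the minimiser is a solution; if
   it vanished on Z[1,N], the equation at k0 would read f(k0, 0) = 0. *)

From Pilot Require Import Defs.
From HB Require Import structures.
From mathcomp Require Import all_boot all_order all_algebra.
From mathcomp Require Import all_classical all_reals all_analysis.
From mathcomp Require Import lra ring zify.
Import Order.TTheory GRing.Theory Num.Theory.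
Import numFieldNormedType.Exports.
Local Open Scope classical_set_scope.
Local Open Scope ring_scope.

Section RealFunctions.
Context {R : realType}.

Lemma continuous_sum {T : topologicalType} (I : eqType) (s : seq I) (F : I -> T -> R) :
  {in s, forall i, continuous (F i)} -> continuous (fun x => \sum_(i <- s) F i x).
Proof.
elim: s => [_ x|i s IH Fc x]; first by under eq_fun do rewrite big_nil; exact: cst_continuous.
under eq_fun do rewrite big_cons.
apply: (continuousD (Fc i (mem_head _ _) x)); apply: IH => j js.
by apply: Fc; rewrite in_cons js orbT.
Qed.

Section Pointwise.
Context {T : topologicalType} (g h : T -> R).
Hypotheses (gc : continuous g) (hc : continuous h).

Lemma continuous_addf : continuous (fun x => g x + h x).
Proof. by move=> x; exact: continuousD (gc x) (hc x). Qed.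

Lemma continuous_subf : continuous (fun x => g x - h x).
Proof. by move=> x; exact: continuousB (gc x) (hc x). Qed.

Lemma continuous_mulf : continuous (fun x => g x * h x).
Proof. by move=> x; exact: continuousM (gc x) (hc x). Qed.

End Pointwise.

Lemma continuous_scaled_sqr {T : topologicalType} (a : R) (g : T -> R) :
  continuous g -> continuous (fun x => a * g x ^+ 2).
Proof.
move=> gc; under eq_fun do rewrite expr2.
by apply: continuous_mulf; [exact: cst_continuous | exact: continuous_mulf].
Qed.

Lemma is_derive_sum_seq (I : eqType) (s : seq I) (F : I -> R -> R) (dF : I -> R) (x : R) :
  {in s, forall i, is_derive x 1 (F i) (dF i)} ->
  is_derive x 1 (fun t => \sum_(i <- s) F i t) (\sum_(i <- s) dF i).
Proof.
elim: s => [_|i s IH dFs].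
  by under eq_fun do rewrite big_nil; rewrite big_nil; exact: is_derive_cst.
under eq_fun do rewrite big_cons; rewrite big_cons.
apply: is_deriveD; first exact: dFs (mem_head _ _).
by apply: IH => j js; apply: dFs; rewrite in_cons js orbT.
Qed.

Lemma is_derive_line (u v t : R) : is_derive t 1 (fun s => u + s * v) v.
Proof.
have dl : is_derive t 1 (fun s => u + s * v) (0 + (t * 0 + v * 1)) :=
  is_deriveD (is_derive_cst u t 1) (is_deriveM (is_derive_id t 1) (is_derive_cst v t 1)).
by rewrite mulr0 mulr1 !add0r in dl.
Qed.

Lemma is_derive_sqr_line (a u v t : R) :
  is_derive t 1 (fun s => a / 2 * (u + s * v) ^+ 2) (a * (u + t * v) * v).
Proof.
have dl := is_derive_line u v t.
have dq : is_derive t 1 (fun s => a / 2 * ((u + s * v) * (u + s * v)))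
    (a / 2 * ((u + t * v) * v + (u + t * v) * v) + (u + t * v) * (u + t * v) * 0) :=
  is_deriveM (is_derive_cst (a / 2) t 1) (is_deriveM dl dl).
under eq_fun do rewrite expr2.
suff -> : a * (u + t * v) * v = a / 2 * ((u + t * v) * v + (u + t * v) * v)
  + (u + t * v) * (u + t * v) * 0 by [].
by field.
Qed.

End RealFunctions.

Section RowSquaredNorm.
Context {R : realType} {n : nat}.
Implicit Types (u v h : 'rV[R]_n) (a t : R).

Definition sqnorm u : R := \sum_(i < n) u ord0 i ^+ 2.
Definition dotr u v : R := \sum_(i < n) u ord0 i * v ord0 i.

Lemma dotrr u : dotr u u = sqnorm u.
Proof. by apply: eq_bigr => i _; rewrite expr2. Qed.

Lemma sqnorm0 : sqnorm 0 = 0.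
Proof. by rewrite /sqnorm big1 // => i _; rewrite mxE expr0n. Qed.

Lemma sqnorm_ge0 u : 0 <= sqnorm u.
Proof. by apply: sumr_ge0 => i _; exact: sqr_ge0. Qed.

Lemma sqr_coord_le_sqnorm u i : u ord0 i ^+ 2 <= sqnorm u.
Proof.
rewrite /sqnorm (bigD1 i) //= lerDl; apply: sumr_ge0 => j _; exact: sqr_ge0.
Qed.

Lemma normr_coord_le_sqrt_sqnorm u i : `|u ord0 i| <= Num.sqrt (sqnorm u).
Proof. by rewrite -sqrtr_sqr ler_sqrt ?sqnorm_ge0 ?sqr_coord_le_sqnorm. Qed.

Lemma sqnorm_gt0 u : u != 0 -> 0 < sqnorm u.
Proof.
move=> u0; have [i ui0] : exists i, u ord0 i != 0.
  apply/existsP; apply: contraR u0 => /existsPn ui0; apply/eqP/rowP => i.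
  by have := ui0 i; rewrite negbK mxE => /eqP.
apply: lt_le_trans (sqr_coord_le_sqnorm u i).
by rewrite lt_def sqrf_eq0 ui0 sqr_ge0.
Qed.

Lemma sqnormZ a u : sqnorm (a *: u) = a ^+ 2 * sqnorm u.
Proof. by rewrite /sqnorm mulr_sumr; apply: eq_bigr => i _; rewrite mxE exprMn. Qed.

Lemma sqnormDZ u h t :
  sqnorm (u + t *: h) = sqnorm u + 2 * t * dotr u h + t ^+ 2 * sqnorm h.
Proof.
rewrite /sqnorm /dotr !mulr_sumr -!big_split /=.
by apply: eq_bigr => i _; rewrite !mxE; ring.
Qed.

Lemma dotr_delta u j : dotr u (delta_mx ord0 j) = u ord0 j.
Proof.
rewrite /dotr (bigD1 j) //= mxE !eqxx mulr1 big1 ?addr0 // => i ij.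
by rewrite mxE (negbTE ij) andbF mulr0.
Qed.

Lemma continuous_coord_comb (c : 'I_n -> R) :
  continuous (fun x : 'rV[R]_n => \sum_(j < n) x ord0 j * c j).
Proof.
apply: continuous_sum => j _ x.
by apply: continuousM; [exact: coord_continuous | exact: cst_continuous].
Qed.

Lemma continuous_sqnorm : continuous sqnorm.
Proof.
apply: continuous_sum => i _ v; under eq_fun do rewrite expr2.
by apply: continuousM; exact: coord_continuous.
Qed.

Lemma bounded_closed_rV_compact (C : set 'rV[R]_n) r :
  closed C -> (forall u, C u -> Num.sqrt (sqnorm u) <= r) -> compact C.
Proof.
move=> Ccl Cb; apply: (subclosed_compact Ccl
  (@rV_compact R n (fun=> `[- r, r]%classic) (fun=> @segment_compact R (- r) r))).
move=> u /Cb ur i /=; rewrite in_itv /= -ler_norml.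
exact: le_trans (normr_coord_le_sqrt_sqnorm u i) ur.
Qed.

Lemma rV_min_of_coercive (phi : 'rV[R]_n -> R) r : continuous phi ->
  (forall u, r < Num.sqrt (sqnorm u) -> phi 0 <= phi u) ->
  exists c, forall u, phi c <= phi u.
Proof.
move=> phic phi_out; set r' := Num.max r 0.
have r'0 : 0 <= r' by rewrite le_max lexx orbT.
pose K := sqnorm @^-1` [set s | s <= r' ^+ 2].
have K0 : K 0 by rewrite /K /= sqnorm0 sqr_ge0.
have Kcpt : compact K.
  apply: (@bounded_closed_rV_compact _ r').
    by apply: preimage_closed; [move=> u _; exact: continuous_sqnorm | exact: closed_le].
  by move=> u Ku; rewrite -(ger0_norm r'0) -sqrtr_sqr ler_sqrt ?sqr_ge0.
have [c _ cmin] := EVT_min_rV (ex_intro _ 0 K0) Kcpt (continuous_subspaceT phic).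
exists c => u; have [Ku|] := boolP (sqnorm u <= r' ^+ 2); first by apply: cmin; rewrite inE.
rewrite -ltNge => uK; apply: le_trans (cmin _ _) (phi_out _ _); first by rewrite inE.
have rr' : r <= r' by rewrite le_max lexx.
apply: le_lt_trans rr' _; rewrite -(ger0_norm r'0) -sqrtr_sqr.
by rewrite ltr_sqrt // (le_lt_trans (sqr_ge0 r') uK).
Qed.

End RowSquaredNorm.

Lemma lin_coef_eq0_of_quad_ge0 {R : realType} (a b : R) :
  (forall t, 0 <= t * a + t ^+ 2 * b) -> a = 0.
Proof.
move=> H; set d := `|b| + 1.
have d0 : 0 < d by rewrite ltr_wpDl.
have bd : b < d by have := ler_norm b; rewrite /d; lra.
have := H (- a / d).
have -> : - a / d * a + (- a / d) ^+ 2 * b = a ^+ 2 * (b - d) / d ^+ 2.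
  by field; rewrite gt_eqF.
rewrite pmulr_lge0 ?invr_gt0 ?exprn_gt0 // => h.
have : a ^+ 2 <= 0 by nra.
by move=> a2; apply/eqP; rewrite -sqrf_eq0 eq_le a2 sqr_ge0.
Qed.

Section GramMatrix.
Context {R : realType} {n m : nat} (B : 'M[R]_(n, m)).
Implicit Types (u v : 'rV[R]_n).

Lemma dotr_mulmx u v :
  dotr (u *m B) (v *m B) = dotr (u *m (B *m B^T)) v.
Proof.
rewrite /dotr mulmxA; under [RHS]eq_bigr do rewrite mxE mulr_suml.
rewrite [RHS]exchange_big /=; apply: eq_bigr => i _.
rewrite [(v *m B) _ _]mxE mulr_sumr; apply: eq_bigr => j _.
by rewrite !mxE; ring.
Qed.

Lemma continuous_sqnorm_mulmx : continuous (fun v : 'rV[R]_n => sqnorm (v *m B)).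
Proof.
have cB i : continuous (fun v : 'rV[R]_n => (v *m B) ord0 i).
  by under eq_fun do rewrite mxE; exact: continuous_coord_comb.
apply: continuous_sum => i _ v; under eq_fun do rewrite expr2.
by apply: continuousM; exact: cB.
Qed.

Lemma gram_eigenvalue_ge0 a : eigenvalue (B *m B^T) a -> 0 <= a.
Proof.
move=> /eigenvalueP [v va v0].
have e : sqnorm (v *m B) = a * sqnorm v.
  rewrite -dotrr dotr_mulmx va /dotr /sqnorm mulr_sumr.
  by apply: eq_bigr => i _; rewrite mxE; ring.
by rewrite -(pmulr_lge0 _ (sqnorm_gt0 _ v0)) -e sqnorm_ge0.
Qed.

Lemma sqnorm_mulmx_min_sphere : (0 < n)%N -> exists2 c : 'rV[R]_n,
  sqnorm c = 1 & forall v, sqnorm (c *m B) * sqnorm v <= sqnorm (v *m B).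
Proof.
move=> n0; pose S := (@sqnorm R n) @^-1` [set 1].
have Scl : closed S.
  by apply: preimage_closed; [move=> v _; exact: continuous_sqnorm | exact: closed_eq].
have Scpt : compact S.
  by apply: (@bounded_closed_rV_compact _ _ _ 1 Scl) => u /= ->; rewrite sqrtr1.
have S0 : S !=set0.
  exists (delta_mx ord0 (Ordinal n0)).
  by rewrite /S /= -dotrr dotr_delta mxE !eqxx.
have [c Sc cmin] := EVT_min_rV S0 Scpt (continuous_subspaceT continuous_sqnorm_mulmx).
rewrite inE in Sc; exists c => // v.
have [->|v0] := eqVneq (sqnorm v) 0; first by rewrite mulr0 sqnorm_ge0.
have vpos : 0 < sqnorm v by rewrite lt_def v0 sqnorm_ge0.
set s := Num.sqrt (sqnorm v).
have s0 : 0 < s by rewrite sqrtr_gt0.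
have ss : s ^+ 2 = sqnorm v by rewrite sqr_sqrtr // ltW.
have := cmin (s^-1 *: v); rewrite !inE /S /= -scalemxAl !sqnormZ -ss exprVn.
rewrite mulVf ?expf_neq0 ?gt_eqF // => /(_ erefl).
by rewrite mulrC -ler_pdivlMr ?exprn_gt0 // mulrC.
Qed.

(* At the minimiser c of the Rayleigh quotient, t |-> |(c + t h) B|^2 - mu |c + t h|^2
   is nonnegative and vanishes at 0, so its linear coefficient vanishes. *)
Lemma gram_eigenvector_of_min (c : 'rV[R]_n) : sqnorm c = 1 ->
  (forall v, sqnorm (c *m B) * sqnorm v <= sqnorm (v *m B)) ->
  c *m (B *m B^T) = sqnorm (c *m B) *: c.
Proof.
move=> c1 cmin; set mu := sqnorm (c *m B).
apply/rowP => j; rewrite [RHS]mxE; pose h : 'rV[R]_n := delta_mx ord0 j.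
suff : 2 * (dotr (c *m B) (h *m B) - mu * dotr c h) = 0.
  by rewrite dotr_mulmx /h !dotr_delta; lra.
apply: (@lin_coef_eq0_of_quad_ge0 _ _ (sqnorm (h *m B) - mu * sqnorm h)) => t.
have := cmin (c + t *: h); rewrite mulmxDl -scalemxAl !sqnormDZ c1 -/mu.
by rewrite -subr_ge0; congr (0 <= _); ring.
Qed.

Lemma min_eig_gram_le u : (0 < n)%N ->
  min_eig (B *m B^T) * sqnorm u <= sqnorm (u *m B).
Proof.
move=> n0; have [c c1 cmin] := sqnorm_mulmx_min_sphere n0.
have ceig : eigenvalue (B *m B^T) (sqnorm (c *m B)).
  apply/eigenvalueP; exists c; first exact: gram_eigenvector_of_min.
  by apply: contra_eq_neq c1 => ->; rewrite sqnorm0 eq_sym oner_eq0.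
apply: le_trans (cmin u); rewrite ler_wpM2r ?sqnorm_ge0 //.
by apply: ge_inf ceig; exists 0 => a; exact: gram_eigenvalue_ge0.
Qed.

End GramMatrix.

Section Primitive.
Context {R : realType} {f : int -> R -> R} {k : int}.
Hypothesis fk_cont : continuous (f k).
Notation mu := (@lebesgue_measure R).

Lemma integrable_segment (a b : R) : mu.-integrable `[a, b] (EFin \o f k).
Proof.
apply: continuous_compact_integrable; first exact: segment_compact.
exact: continuous_subspaceT.
Qed.

Lemma Fprim_shift c s : c < 0 -> c < s ->
  Fprim f k s = \int[mu]_(t in `[c, s]) f k t - \int[mu]_(t in `[c, 0]) f k t.
Proof.
move=> c0 cs; rewrite /Fprim; case: ifPn => [s0|].
  rewrite (@Rintegral_itvB _ _ (BLeft c) (BRight s) 0 (integrable_segment c s));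
    rewrite ?bnd_simp ?(ltW c0) //.
  rewrite Rintegral_itv_obnd_cbnd //; apply: integrableS (integrable_segment c s) => //.
  by apply: subset_itvr; rewrite bnd_simp ltW.
rewrite -ltNge => s0.
have := @Rintegral_itvB _ (f k) (BLeft c) (BRight 0) s (integrable_segment c 0).
rewrite Rintegral_itv_obnd_cbnd; last first.
  apply: integrableS (integrable_segment c 0) => //; apply: subset_itvr.
  by rewrite bnd_simp ltW.
by rewrite ?bnd_simp ?ltW // => /(_ isT isT) <-; rewrite opprB.
Qed.

Lemma Fprim_derive (x : R) : is_derive x 1 (Fprim f k) (f k x).
Proof.
pose c := Num.min x 0 - 1.
have min0 : Num.min x 0 <= 0 by rewrite ge_min lexx orbT.
have minx : Num.min x 0 <= x by rewrite ge_min lexx.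
have c0 : c < 0 by rewrite /c; lra.
have cx : c < x by rewrite /c; lra.
have [dG G'] := continuous_FTC1_closed (ltr_pwDr ltr01 (lexx x))
  (integrable_segment c (x + 1)) cx (fk_cont x).
have dGc : is_derive x 1 (fun s => \int[mu]_(t in `[c, s]) f k t
                                  - \int[mu]_(t in `[c, 0]) f k t) (f k x - 0).
  by apply: is_deriveB; apply: DeriveDef; rewrite -?derive1E.
rewrite subr0 in dGc; apply: near_eq_is_derive dGc.
by near=> s; rewrite (Fprim_shift c s c0) //; near: s; exact: lt_nbhsr.
Unshelve. all: by end_near. Qed.

Lemma continuous_Fprim : continuous (Fprim f k).
Proof.
move=> x; apply: differentiable_continuous; apply/derivable1_diffP.
by have [] := Fprim_derive x.
Qed.

Lemma Fprim_MVT a b : a <= b ->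
  exists2 xi, a <= xi <= b & Fprim f k b - Fprim f k a = f k xi * (b - a).
Proof.
move=> ab; have [xi] := MVT_segment ab (fun x _ => Fprim_derive x)
  (continuous_subspaceT continuous_Fprim).
by rewrite in_itv /=; exists xi.
Qed.

(* Outside [-m, m] the sign condition makes F nondecreasing in |s|, so F is
   bounded below by its minimum on [-m, m]. *)
Lemma Fprim_bounded_below m : 0 < m ->
  (forall s, m <= `|s| -> 0 <= s * f k s) -> exists C, forall s, C <= Fprim f k s.
Proof.
move=> m0 fsign.
have [c _ cmin] := EVT_min (ltW (gtrN m0)) (continuous_subspaceT continuous_Fprim).
exists (Fprim f k c) => s.
have cminE x : - m <= x <= m -> Fprim f k c <= Fprim f k x.
  by move=> xm; apply: cmin; rewrite in_itv.
have [ms|] := ltP m s.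
  have [xi /andP[mxi xis] dF] := Fprim_MVT _ _ (ltW ms).
  have := fsign xi; rewrite ger0_norm; last by lra.
  move=> /(_ mxi); rewrite pmulr_rge0; last by lra.
  move=> fxi; apply: le_trans (cminE m _) _; first by lra.
  by rewrite -subr_ge0 dF mulr_ge0 // subr_ge0 ltW.
have [sm _|sm sm'] := ltP s (- m).
  have [xi /andP[sxi xim] dF] := Fprim_MVT _ _ (ltW sm).
  have := fsign xi; rewrite ler0_norm; last by lra.
  move=> /(_ ltac:(lra)); rewrite nmulr_rge0; last by lra.
  move=> fxi; apply: le_trans (cminE (- m) _) _; first by lra.
  by rewrite -subr_le0 dF mulr_le0_ge0 // subr_ge0 ltW.
by apply: cminE; rewrite sm sm'.
Qed.

End Primitive.

Section FiniteDifferences.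
Context {R : realType}.
Implicit Types (y e : int -> R) (k : int) (t : R).

Lemma fdiff_shiftE y k : fdiff y (k - 1) = y k - y (k - 1).
Proof. by rewrite /fdiff subrK. Qed.

Lemma fdiff2_shiftE y k : fdiff (fdiff y) (k - 2) = y k - 2 * y (k - 1) + y (k - 2).
Proof.
rewrite /fdiff (_ : k - 2 + 1 + 1 = k); last by ring.
by rewrite (_ : k - 2 + 1 = k - 1); [ring | ring].
Qed.

Lemma fdiff_line y e t : fdiff (fun k => y k + t * e k) = fun k => fdiff y k + t * fdiff e k.
Proof. by apply/funext => k; rewrite /fdiff; ring. Qed.

Lemma sum_indicator (G : int -> R) (b : nat) (m : int) : 1 <= m < b%:Z ->
  \sum_(1 <= k < b) G k%:Z * (k%:Z == m)%:R = G m.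
Proof.
move=> mb; have [n mn] : exists n : nat, m = n%:Z by exists `|m|%N; rewrite gez0_abs //; lia.
rewrite mn in mb *; have nb : n \in index_iota 1 b by rewrite mem_index_iota; lia.
rewrite (bigD1_seq n) ?iota_uniq //=.
rewrite eqxx mulr1 big1_seq ?addr0 // => k /andP[kn _].
by rewrite eqz_nat (negbTE kn) mulr0.
Qed.

Lemma fdiff2E y k : fdiff (fdiff y) k = y (k + 2) - 2 * y (k + 1) + y k.
Proof. by rewrite /fdiff (_ : k + 1 + 1 = k + 2); [ring | ring]. Qed.

Definition sum_sqr_fdiff (N : nat) y : R :=
  \sum_(1 <= k < N.+2) fdiff y (k%:Z - 1) ^+ 2.
Definition sum_sqr_fdiff2 (N : nat) y : R :=
  \sum_(1 <= k < N.+3) fdiff (fdiff y) (k%:Z - 2) ^+ 2.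

Variable N : nat.

Lemma sum_shift_supported (G : int -> R) (s t : nat) : (s <= t)%N ->
  (forall k, ~~ (1 <= k <= N%:Z) -> G k = 0) ->
  \sum_(1 <= k < N.+1 + t) G (k%:Z - s%:Z) = \sum_(1 <= k < N.+1) G k%:Z.
Proof.
move=> st G0.
rewrite (@big_cat_nat _ _ _ (N.+1 + s)%N) /=; [|lia|lia].
rewrite [X in _ + X]big1_seq ?addr0; last first.
  move=> k /andP[_]; rewrite mem_index_iota => /andP[k1 k2]; apply: G0.
  by apply/negP => /andP[]; lia.
rewrite (@big_cat_nat _ _ _ s.+1) /=; [|lia|lia].
rewrite big1_seq ?add0r; last first.
  move=> k /andP[_]; rewrite mem_index_iota => /andP[k1 k2]; apply: G0.
  by apply/negP => /andP[]; lia.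
rewrite -[s.+1]/(1 + s)%N big_addn addnK; apply: eq_bigr => k _.
by rewrite PoszD addrK.
Qed.

Section Supported.
Variable y : int -> R.
Hypothesis y_supp : forall k, ~~ (1 <= k <= N%:Z) -> y k = 0.

Let sqr_supp k : ~~ (1 <= k <= N%:Z) -> y k ^+ 2 = 0.
Proof. by move/y_supp ->; rewrite expr0n. Qed.

Lemma sum_sqr_fdiff_le : sum_sqr_fdiff N y <= 4 * \sum_(1 <= k < N.+1) y k%:Z ^+ 2.
Proof.
have h0 := @sum_shift_supported _ 0 1 isT sqr_supp.
have h1 := @sum_shift_supported _ 1 1 isT sqr_supp.
rewrite /= addn1 in h0 h1.
apply: (@le_trans _ _ (\sum_(1 <= k < N.+2)
  (2 * y (k%:Z - 0%:Z) ^+ 2 + 2 * y (k%:Z - 1%:Z) ^+ 2))).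
  apply: ler_sum => k _; rewrite fdiff_shiftE subr0 -subr_ge0.
  set a := y k%:Z; set b := y (k%:Z - 1).
  have -> : 2 * a ^+ 2 + 2 * b ^+ 2 - (a - b) ^+ 2 = (a + b) ^+ 2 by ring.
  exact: sqr_ge0.
by rewrite big_split /= -!mulr_sumr h0 h1; lra.
Qed.

Lemma sum_sqr_fdiff2_le : sum_sqr_fdiff2 N y <= 16 * \sum_(1 <= k < N.+1) y k%:Z ^+ 2.
Proof.
have h0 := @sum_shift_supported _ 0 2 isT sqr_supp.
have h1 := @sum_shift_supported _ 1 2 isT sqr_supp.
have h2 := @sum_shift_supported _ 2 2 isT sqr_supp.
rewrite /= addn2 in h0 h1 h2.
apply: (@le_trans _ _ (\sum_(1 <= k < N.+3) (4 * y (k%:Z - 0%:Z) ^+ 2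
  + 8 * y (k%:Z - 1%:Z) ^+ 2 + 4 * y (k%:Z - 2%:Z) ^+ 2))).
  apply: ler_sum => k _; rewrite fdiff2_shiftE subr0 -subr_ge0.
  set a := y k%:Z; set b := y (k%:Z - 1); set c := y (k%:Z - 2).
  have -> : 4 * a ^+ 2 + 8 * b ^+ 2 + 4 * c ^+ 2 - (a - 2 * b + c) ^+ 2 =
    (a + c + 2 * b) ^+ 2 + 2 * (a - c) ^+ 2 by ring.
  by apply: addr_ge0; [exact: sqr_ge0 | apply: mulr_ge0 => //; exact: sqr_ge0].
by rewrite !big_split /= -!mulr_sumr h0 h1 h2; lra.
Qed.
End Supported.

End FiniteDifferences.

Section Embedding.
Context {R : realType} {N : nat}.
Implicit Types (x d : 'rV[R]_N) (k : int).

(* Expanded in the basis [ext_of (delta_mx j 0)] used by [Vmx] and [Wmx], so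
   that the differences of [ext_row x] are the entries of [x *m (Vmx R N)^T]
   and [x *m (Wmx R N)^T]. *)
Definition ext_row x : int -> R :=
  fun k => \sum_(j < N) x ord0 j * ext_of (delta_mx j 0 : 'cV[R]_N) k.

Lemma int_in_range k : 1 <= k <= N%:Z -> exists j : 'I_N, k = (j.+1)%:Z.
Proof.
case: k => [[|n]|n] // /andP[_ nN].
have nN' : (n < N)%N by lia.
by exists (Ordinal nN').
Qed.

Lemma ext_of_delta (j : 'I_N) k : ext_of (delta_mx j 0 : 'cV[R]_N) k = (k == (j.+1)%:Z)%:R.
Proof.
rewrite /ext_of; case: k => [[|n]|n] //=.
case: insubP => [i _ vi|nN] /=; first by rewrite mxE eqxx andbT eqz_nat eqSS -vi.
by rewrite eqz_nat eqSS; case: eqP => // nj; move: nN; rewrite nj ltn_ord.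
Qed.

Lemma ext_row_out x k : ~~ (1 <= k <= N%:Z) -> ext_row x k = 0.
Proof.
move=> kN; rewrite /ext_row big1 // => j _; rewrite ext_of_delta.
case: eqP => [kj|_]; last by rewrite mulr0.
by move: kN; rewrite kj; have := ltn_ord j; lia.
Qed.

Lemma ext_row_in x (j : 'I_N) : ext_row x (j.+1)%:Z = x ord0 j.
Proof.
rewrite /ext_row; under eq_bigr do rewrite ext_of_delta.
rewrite (bigD1 j) //= eqxx mulr1 big1 ?addr0 // => i ij.
rewrite eqz_nat eqSS; case: eqP => [/val_inj ji|_]; last by rewrite mulr0.
by move: ij; rewrite ji eqxx.
Qed.

Lemma ext_rowDZ x d t k : ext_row (x + t *: d) k = ext_row x k + t * ext_row d k.
Proof.
by rewrite /ext_row mulr_sumr -big_split; apply: eq_bigr => j _; rewrite !mxE /=; ring.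
Qed.

Lemma ext_row_delta (j : 'I_N) k :
  ext_row (delta_mx ord0 j) k = ext_of (delta_mx j 0 : 'cV[R]_N) k.
Proof.
rewrite /ext_row (bigD1 j) //= mxE !eqxx mul1r big1 ?addr0 // => i ij.
by rewrite mxE (negbTE ij) andbF mul0r.
Qed.

Lemma ext_row_inE x : Defs.inE N (ext_row x).
Proof. by split; [|split; [|split]]; apply: ext_row_out; apply/negP => /andP[]; lia. Qed.

Lemma sum_sqr_ext_row x : \sum_(1 <= k < N.+1) ext_row x k%:Z ^+ 2 = sqnorm x.
Proof. by rewrite big_add1 /= big_mkord; apply: eq_bigr => j _; rewrite ext_row_in. Qed.

Lemma normE_ext_row x : normE N (ext_row x) = Num.sqrt (sqnorm x).
Proof. by rewrite /normE sum_sqr_ext_row. Qed.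

Lemma ext_row_of_inE y : Defs.inE N y ->
  forall k, -1 <= k <= N%:Z + 2 -> ext_row (\row_(j < N) y (j.+1)%:Z) k = y k.
Proof.
move=> [ym1 [y0 [yN1 yN2]]] k kN.
have [/int_in_range [j ->]|kout] := boolP (1 <= k <= N%:Z).
  by rewrite ext_row_in mxE.
rewrite ext_row_out //.
have : k = -1 \/ k = 0 \/ k = N%:Z + 1 \/ k = N%:Z + 2.
  move: kN kout => /andP[k1 k2] /negP kout.
  have : ~ (1 <= k /\ k <= N%:Z) by move=> [a b]; apply: kout; rewrite a b.
  lia.
by case=> [->|[->|[->|->]]].
Qed.

Lemma continuous_ext_row k : continuous (fun x => ext_row x k).
Proof. exact: continuous_coord_comb. Qed.

Lemma fdiff_ext_row x k :
  fdiff (ext_row x) k = \sum_(j < N) x ord0 j * fdiff (ext_of (delta_mx j 0 : 'cV[R]_N)) k.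
Proof. by rewrite /fdiff /ext_row -sumrB; apply: eq_bigr => j _; ring. Qed.

Lemma fdiff2_ext_row x k : fdiff (fdiff (ext_row x)) k =
  \sum_(j < N) x ord0 j * fdiff (fdiff (ext_of (delta_mx j 0 : 'cV[R]_N))) k.
Proof. by rewrite /fdiff /ext_row -!sumrB; apply: eq_bigr => j _; ring. Qed.

Lemma sum_sqr_fdiff_ext_row x : sum_sqr_fdiff N (ext_row x) = sqnorm (x *m (Vmx R N)^T).
Proof.
rewrite /sum_sqr_fdiff big_add1 /= big_mkord; apply: eq_bigr => i _.
rewrite mxE fdiff_ext_row (_ : (i.+1)%:Z - 1 = i%:Z); last by rewrite -addn1 PoszD addrK.
by congr (_ ^+ 2); apply: eq_bigr => j _; rewrite !mxE; reflexivity.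
Qed.

Lemma sum_sqr_fdiff2_ext_row x : sum_sqr_fdiff2 N (ext_row x) = sqnorm (x *m (Wmx R N)^T).
Proof.
rewrite /sum_sqr_fdiff2 big_add1 /= big_mkord; apply: eq_bigr => i _.
rewrite mxE fdiff2_ext_row (_ : (i.+1)%:Z - 2 = i%:Z - 1); last by rewrite -addn1 PoszD; ring.
by congr (_ ^+ 2); apply: eq_bigr => j _; rewrite !mxE; reflexivity.
Qed.

Lemma lambda1_sqnorm_le x : (0 < N)%N ->
  lambda1 R N * sqnorm x <= sum_sqr_fdiff N (ext_row x).
Proof.
move=> N0; rewrite sum_sqr_fdiff_ext_row.
by have := min_eig_gram_le (Vmx R N)^T x N0; rewrite trmxK.
Qed.

Lemma lambda2_sqnorm_le x : (0 < N)%N ->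
  lambda2 R N * sqnorm x <= sum_sqr_fdiff2 N (ext_row x).
Proof.
move=> N0; rewrite sum_sqr_fdiff2_ext_row.
by have := min_eig_gram_le (Wmx R N)^T x N0; rewrite trmxK.
Qed.

End Embedding.

Lemma sqr_growth_eventually_gt {R : realType} (a b M : R) : 0 < a ->
  exists r, forall s, r < s -> M < a * s ^+ 2 + b.
Proof.
move=> a0; exists (1 + `|M - b| / a) => s rs.
have Mb := ler_norm (M - b).
have rE : a * (1 + `|M - b| / a) = a + `|M - b| by field; rewrite gt_eqF.
have s1 : 1 < s by apply: le_lt_trans rs; rewrite lerDl divr_ge0 ?normr_ge0 ?ltW.
have : a * (1 + `|M - b| / a) < a * s by rewrite ltr_pM2l.
rewrite rE => asr; have : a * s <= a * s ^+ 2 by rewrite ler_pM2l // expr2 ler_peMl //; lra.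
lra.
Qed.

Section SeqExtrema.
Context {d : Order.disp_t} {T : orderType d} {I : eqType}.

Lemma bigmin_seq_le (s : seq I) (F : I -> T) a x : x \in s ->
  (\big[Order.min/a]_(i <- s) F i <= F x)%O.
Proof.
elim: s => // b s IH; rewrite in_cons big_cons => /orP[/eqP ->|xs].
  by rewrite ge_min lexx.
by rewrite ge_min IH ?orbT.
Qed.

Lemma bigmax_seq_ge (s : seq I) (F : I -> T) a x : x \in s ->
  (F x <= \big[Order.max/a]_(i <- s) F i)%O.
Proof.
elim: s => // b s IH; rewrite in_cons big_cons => /orP[/eqP ->|xs].
  by rewrite le_max lexx.
by rewrite le_max IH ?orbT.
Qed.

End SeqExtrema.

Section Locality.
Context {R : realType} (N : nat).
Implicit Types (y z : int -> R).

Lemma Jfun_eq_on p q (f : int -> R -> R) y z :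
  (forall k, -1 <= k <= N%:Z + 2 -> y k = z k) -> Jfun N p q f y = Jfun N p q f z.
Proof.
move=> yz; rewrite /Jfun; congr (_ - _ + _); apply: eq_big_nat => k /andP[k1 k2];
  by rewrite /fdiff ?yz //; apply/andP; split; lia.
Qed.

Lemma normE_eq_on y z : (forall k, 1 <= k <= N%:Z -> y k = z k) -> normE N y = normE N z.
Proof.
move=> yz; rewrite /normE; congr Num.sqrt; apply: eq_big_nat => k /andP[k1 k2].
by rewrite yz //; apply/andP; split; lia.
Qed.

End Locality.

Section Coercivity.
Context {R : realType} {N : nat} {p q : int -> R} {f : int -> R -> R}.
Hypothesis N_gt0 : (0 < N)%N.

Let pmin_le (k : nat) : (1 <= k < N.+3)%N -> pmin N p <= p k%:Z.
Proof. by move=> kN; apply: bigmin_seq_le; rewrite mem_index_iota. Qed.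

Let qmax_ge (k : nat) : (1 <= k < N.+2)%N -> q k%:Z <= qmax N q.
Proof. by move=> kN; apply: (bigmax_seq_ge _ (fun k : nat => q k%:Z)); rewrite mem_index_iota. Qed.

Lemma eta_p_sqnorm_le (x : 'rV[R]_N) :
  eta_p N p * pmin N p * sqnorm x <= pmin N p * sum_sqr_fdiff2 N (ext_row x).
Proof.
rewrite /eta_p [_ * pmin N p]mulrC -mulrA; case: ifPn => [p0|].
  by rewrite ler_wpM2l // lambda2_sqnorm_le.
rewrite -ltNge => p0; rewrite ler_wnM2l ?(ltW p0) // -sum_sqr_ext_row.
by apply: sum_sqr_fdiff2_le; exact: ext_row_out.
Qed.

Lemma eta_q_sqnorm_ge (x : 'rV[R]_N) :
  qmax N q * sum_sqr_fdiff N (ext_row x) <= eta_q N q * qmax N q * sqnorm x.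
Proof.
rewrite /eta_q [_ * qmax N q]mulrC -mulrA; case: ifPn => [q0|].
  by rewrite ler_wnM2l ?(ltW q0) // lambda1_sqnorm_le.
rewrite -leNgt => q0; rewrite ler_wpM2l // -sum_sqr_ext_row.
by apply: sum_sqr_fdiff_le; exact: ext_row_out.
Qed.

Context {C : int -> R}.
Hypothesis C_le_Fprim : forall k, 1 <= k <= N%:Z -> forall s, C k <= Fprim f k s.

Lemma Jfun_ext_row_ge (x : 'rV[R]_N) :
  (eta_p N p * pmin N p - eta_q N q * qmax N q) / 2 * sqnorm x
   + \sum_(1 <= k < N.+1) C k%:Z <= Jfun N p q f (ext_row x).
Proof.
rewrite /Jfun.
have hp : pmin N p * sum_sqr_fdiff2 N (ext_row x) / 2 <=
    \sum_(1 <= k < N.+3) (p k%:Z / 2 * fdiff (fdiff (ext_row x)) (k%:Z - 2) ^+ 2).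
  rewrite /sum_sqr_fdiff2 mulr_sumr mulr_suml; apply: ler_sum_nat => k kN.
  rewrite [leRHS]mulrAC; apply: ler_wpM2r; first by rewrite invr_ge0.
  by apply: ler_wpM2r; [exact: sqr_ge0 | exact: pmin_le].
have hq : \sum_(1 <= k < N.+2) (q k%:Z / 2 * fdiff (ext_row x) (k%:Z - 1) ^+ 2) <=
    qmax N q * sum_sqr_fdiff N (ext_row x) / 2.
  rewrite /sum_sqr_fdiff mulr_sumr mulr_suml; apply: ler_sum_nat => k kN.
  rewrite [leLHS]mulrAC; apply: ler_wpM2r; first by rewrite invr_ge0.
  by apply: ler_wpM2r; [exact: sqr_ge0 | exact: qmax_ge].
have hF : \sum_(1 <= k < N.+1) C k%:Z <= \sum_(1 <= k < N.+1) Fprim f k%:Z (ext_row x k%:Z).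
  by apply: ler_sum_nat => k kN; apply: C_le_Fprim; apply/andP; split; lia.
have := eta_p_sqnorm_le x; have := eta_q_sqnorm_ge x; lra.
Qed.

Hypothesis eta_gap : 0 < eta_p N p * pmin N p - eta_q N q * qmax N q.

Lemma Jfun_coercive : coercive_on_E N (Jfun N p q f).
Proof.
move=> M; have [r rP] := @sqr_growth_eventually_gt _ _ (\sum_(1 <= k < N.+1) C k%:Z) M
  (divr_gt0 eta_gap (ltr0Sn _ 1)).
exists r => y yE ry; pose x := \row_(j < N) y (j.+1)%:Z.
have yx := ext_row_of_inE _ yE.
rewrite (@Jfun_eq_on _ _ _ _ _ _ (ext_row x)); last by move=> k /yx.
rewrite (@normE_eq_on _ _ _ (ext_row x)) ?normE_ext_row in ry; last first.
  by move=> k /andP[k1 k2]; rewrite yx //; apply/andP; split; lia.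
apply: lt_le_trans (Jfun_ext_row_ge x).
by rewrite -[sqnorm x]sqr_sqrtr ?sqnorm_ge0 // rP.
Qed.

End Coercivity.

Section CriticalPoints.
Context {R : realType} (N : nat) (p q : int -> R) (f : int -> R -> R).
Hypothesis f_cont : forall k, 1 <= k <= N%:Z -> continuous (f k).
Implicit Types (y e : int -> R) (t : R).

Definition dJfun y e : R :=
  \sum_(1 <= k < N.+3) p k%:Z * fdiff (fdiff y) (k%:Z - 2) * fdiff (fdiff e) (k%:Z - 2)
  - \sum_(1 <= k < N.+2) q k%:Z * fdiff y (k%:Z - 1) * fdiff e (k%:Z - 1)
  + \sum_(1 <= k < N.+1) f k%:Z (y k%:Z) * e k%:Z.

Lemma is_derive_Jfun_line y e t :
  is_derive t 1 (fun s => Jfun N p q f (fun k => y k + s * e k))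
    (dJfun (fun k => y k + t * e k) e).
Proof.
rewrite /Jfun /dJfun !fdiff_line; under eq_fun do rewrite !fdiff_line.
apply: is_deriveD; first apply: is_deriveB.
- by apply: is_derive_sum_seq => k _; exact: is_derive_sqr_line.
- by apply: is_derive_sum_seq => k _; exact: is_derive_sqr_line.
- apply: is_derive_sum_seq => k; rewrite mem_index_iota => kN.
  have kN' : 1 <= k%:Z <= N%:Z by apply/andP; split; lia.
  exact: is_derive1_comp (Fprim_derive (f_cont _ kN') _) (is_derive_line _ _ t).
Qed.

(* Against the unit vector at K each sum keeps only its terms at K, K + 1, K + 2,
   which reassemble into the difference operators at K. *)
Lemma dJfun_delta y (j : 'I_N) :
  dJfun y (ext_of (delta_mx j 0 : 'cV[R]_N)) = bvp_lhs p q f y (j.+1)%:Z.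
Proof.
set K := (j.+1)%:Z; have jN := ltn_ord j.
have eE m : ext_of (delta_mx j 0 : 'cV[R]_N) m = (m == K)%:R by rewrite ext_of_delta.
pose P k := p k * fdiff (fdiff y) (k - 2); pose Q k := q k * fdiff y (k - 1).
have S1 : \sum_(1 <= k < N.+3) p k%:Z * fdiff (fdiff y) (k%:Z - 2)
      * fdiff (fdiff (ext_of (delta_mx j 0 : 'cV[R]_N))) (k%:Z - 2)
    = \sum_(1 <= k < N.+3) P k%:Z * (k%:Z == K)%:R
      - 2 * \sum_(1 <= k < N.+3) P k%:Z * (k%:Z == K + 1)%:R
      + \sum_(1 <= k < N.+3) P k%:Z * (k%:Z == K + 2)%:R.
  rewrite mulr_sumr -sumrB -big_split /=; apply: eq_bigr => k _.
  by rewrite (fdiff2_shiftE (ext_of _)) !eE !subr_eq /P; ring.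
have S2 : \sum_(1 <= k < N.+2) q k%:Z * fdiff y (k%:Z - 1)
      * fdiff (ext_of (delta_mx j 0 : 'cV[R]_N)) (k%:Z - 1)
    = \sum_(1 <= k < N.+2) Q k%:Z * (k%:Z == K)%:R
      - \sum_(1 <= k < N.+2) Q k%:Z * (k%:Z == K + 1)%:R.
  rewrite -sumrB; apply: eq_bigr => k _.
  by rewrite (fdiff_shiftE (ext_of _)) !eE !subr_eq /Q; ring.
have S3 : \sum_(1 <= k < N.+1) f k%:Z (y k%:Z) * ext_of (delta_mx j 0 : 'cV[R]_N) k%:Z
    = \sum_(1 <= k < N.+1) f k%:Z (y k%:Z) * (k%:Z == K)%:R.
  by apply: eq_bigr => k _; rewrite eE.
rewrite /dJfun S1 S2 S3 !(sum_indicator (fun k => f k (y k))) ?sum_indicator;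
  try by rewrite /K; apply/andP; split; lia.
by rewrite /bvp_lhs -/P -/Q fdiff2E /fdiff; ring.
Qed.

End CriticalPoints.

Section Minimizer.
Context {R : realType} {N : nat} {p q : int -> R} {f : int -> R -> R}.
Hypothesis f_cont : forall k, 1 <= k <= N%:Z -> continuous (f k).

Lemma continuous_Jfun_ext_row : continuous (fun x : 'rV[R]_N => Jfun N p q f (ext_row x)).
Proof.
rewrite /Jfun; apply: continuous_addf; first apply: continuous_subf.
- apply: continuous_sum => k _; under eq_fun do rewrite fdiff2_ext_row.
  exact: continuous_scaled_sqr (continuous_coord_comb _).
- apply: continuous_sum => k _; under eq_fun do rewrite fdiff_ext_row.
  exact: continuous_scaled_sqr (continuous_coord_comb _).
- apply: continuous_sum => k; rewrite mem_index_iota => kN x.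
  apply: continuous_comp; first exact: continuous_ext_row.
  by apply: continuous_Fprim; apply: f_cont; apply/andP; split; lia.
Qed.

Lemma is_solution_of_min (c : 'rV[R]_N) :
  (forall x : 'rV[R]_N, Jfun N p q f (ext_row c) <= Jfun N p q f (ext_row x)) ->
  is_solution N p q f (ext_row c).
Proof.
move=> cmin; split; last exact: ext_row_inE.
move=> _ /int_in_range [j ->]; rewrite -dJfun_delta.
set e := ext_of _; pose g t := Jfun N p q f (fun k => ext_row c k + t * e k).
have dg := is_derive_Jfun_line N p q f f_cont (ext_row c) e.
have gE t : g t = Jfun N p q f (ext_row (c + t *: delta_mx ord0 j)).
  by congr Jfun; apply/funext => k; rewrite ext_rowDZ ext_row_delta.
have g'0 : is_derive (0 : R) 1 g 0.
  apply: (@derive1_at_min _ g (-1) 1); rewrite ?in_itv /= ?ltrN10 ?ltr01 ?lerN10 //.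
  by move=> t _; rewrite !gE scale0r addr0 cmin.
have dg0 := dg 0; rewrite (_ : (fun k => _) = ext_row c) in dg0; last first.
  by apply/funext => k; rewrite mul0r addr0.
by rewrite -(@derive_val _ _ _ _ _ _ _ dg0) (@derive_val _ _ _ _ _ _ _ g'0).
Qed.

End Minimizer.

Lemma bvp_lhs0 {R : realType} (p q : int -> R) (f : int -> R -> R) k :
  bvp_lhs p q f (fun=> 0) k = f k 0.
Proof. by rewrite /bvp_lhs /fdiff /=; ring. Qed.

Lemma ext_row_solution_neq0 {R : realType} (N : nat) p q (f : int -> R -> R) (c : 'rV[R]_N) k0 :
  is_solution N p q f (ext_row c) -> 1 <= k0 <= N%:Z -> f k0 0 <> 0 ->
  exists k, 1 <= k <= N%:Z /\ ext_row c k <> 0.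
Proof.
move=> [sol _] k0N fk0; apply: contrapT => c0; apply: fk0.
suff c0E : ext_row c = fun=> 0 by have := sol k0 k0N; rewrite c0E bvp_lhs0.
apply/funext => k; have [kN|] := boolP (1 <= k <= N%:Z); last exact: ext_row_out.
by apply: contrapT => ck; apply: c0; exists k.
Qed.

Theorem theorem3 (R : realType) (N : nat) (f : int -> R -> R) (p q : int -> R) :
  (1 <= N)%N ->
  (forall k : int, 1 <= k <= N%:Z -> continuous (f k)) ->
  (exists m : R, 0 < m /\
     forall (k : int) (s : R), 1 <= k <= N%:Z -> m <= `|s| -> 0 <= s * f k s) ->
  eta_p N p * pmin N p - eta_q N q * qmax N q > 0 ->
  coercive_on_E N (Jfun N p q f)
  /\ (exists y : int -> R, is_solution N p q f y)
  /\ ((exists k0 : int, 1 <= k0 <= N%:Z /\ f k0 0 <> 0) ->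
      exists y : int -> R, is_solution N p q f y /\ exists k : int, 1 <= k <= N%:Z /\ y k <> 0).
Proof.
move=> N_gt0 f_cont [m [m0 f_sign]] eta_gap.
have F_bounded k : exists C, 1 <= k <= N%:Z -> forall s, C <= Fprim f k s.
  have [kN|] := boolP (1 <= k <= N%:Z); last by exists 0.
  have [C CF] := Fprim_bounded_below (f_cont k kN) _ m0 (fun s => f_sign k s kN).
  by exists C.
have [C C_le_Fprim] := choice F_bounded.
have J_coercive := Jfun_coercive N_gt0 C_le_Fprim eta_gap.
have [c cmin] : exists c : 'rV[R]_N,
    forall x : 'rV[R]_N, Jfun N p q f (ext_row c) <= Jfun N p q f (ext_row x).
  have [r rP] := J_coercive (Jfun N p q f (ext_row (0 : 'rV[R]_N))).
  apply: (@rV_min_of_coercive _ _ _ r (continuous_Jfun_ext_row f_cont)) => x rx.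
  by apply: ltW; apply: rP; rewrite ?normE_ext_row //; exact: ext_row_inE.
have sol := is_solution_of_min f_cont c cmin.
split=> //; split; first by exists (ext_row c).
move=> [k0 [k0N fk0]]; exists (ext_row c); split => //.
exact: ext_row_solution_neq0 sol k0N fk0.
Qed.
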